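(* Let $\mathcal{C}$ be a $\mathbb{Z}_3\mathbb{Z}_9$-additive code of type $(\alpha,\beta;\gamma,\delta;\kappa)$ and $C=\Phi(\mathcal{C})$. Suppose $\mathrm{rank}(C)=\gamma+2\delta+\bar r$ and $\ker(C)=\gamma+2\delta-\bar k$, where $\bar k\in\{1,\ldots,\delta\}$. Then $$1\le\bar r\le\binom{\bar k}{2}+\binom{\bar k+2}{3}.$$ Moreover, if $\ker(C)=\gamma+2\delta$ (i.e. $\bar k=0$), then $\bar r=0$.
   Context: A $\mathbb{Z}_3\mathbb{Z}_9$-additive code $\mathcal{C}$ is a subgroup of $\mathbb{Z}_3^\alpha\times\mathbb{Z}_9^\beta$; as a group $\mathcal{C}\cong\mathbb{Z}_3^\gamma\times\mathbb{Z}_9^\delta$, and if $\kappa$ is the $\mathbb{Z}_3$-dimension of the projection onto the first $\alpha$ coordinates of the subcode of codewords of order dividing $3$, $\mathcal{C}$ has type $(\alpha,\beta;\gamma,\delta;\kappa)$. The Gray map $\phi:\mathbb{Z}_9\to\mathbb{Z}_3^3$ is $\phi(\theta)=\theta''(1,1,1)+\theta'(0,1,2)$ for $\theta=3\theta''+\theta'$, $\theta',\theta''\in\{0,1,2\}$, and $\Phi(\mathbf{x},\mathbf{y})=(\mathbf{x},\phi(y_1),\ldots,\phi(y_\beta))$. $\mathrm{rank}(C)$ is the $\mathbb{Z}_3$-dimension of the linear span of $C$; $K(C)=\{\mathbf{x}\mid C+\mathbf{x}=C\}$ and $\ker(C)=\dim_{\mathbb{Z}_3}K(C)$. *)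

From HB Require Import structures.
From mathcomp Require Import all_boot all_order all_algebra.
Set Implicit Arguments. Unset Strict Implicit. Unset Printing Implicit Defensive.
Import Order.TTheory GRing.Theory Num.Theory.
Local Open Scope ring_scope.

(* Ambient group Z_3^a x Z_9^b ; Z_3 is represented by the field 'F_3. *)
Definition amb (a b : nat) := ('rV['F_3]_a * 'rV['Z_9]_b)%type.

Definition is_Z3Z9_code (a b : nat) (C : {set amb a b}) : bool :=
  (0 \in C) && [forall x in C, forall y in C, x - y \in C].

Definition has_type (a b : nat) (C : {set amb a b}) (g d k : nat) : Prop :=
  (exists f : 'rV['F_3]_g * 'rV['Z_9]_d -> amb a b,
      {morph f : u v / u + v} /\ injective f /\ f @: [set: _] = C) /\
  let S := [seq x.1 | x <- enum C & x *+ 3 == 0] in \dim (<< S >>)%VS = k.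

(* Gray map phi : Z_9 -> Z_3^3, coordinate k in {0,1,2}:
   phi(t) = t''(1,1,1) + t'(0,1,2) with t = 3 t'' + t'. *)
Definition gray9 (t : 'Z_9) (k : nat) : 'F_3 :=
  (((t : nat) %/ 3)%N + k * ((t : nat) %% 3)%N)%:R.

Lemma div3_ord (b : nat) (j : 'I_(3 * b)) : (j %/ 3 < b)%N.
Proof. by rewrite ltn_divLR // [X in (_ < X)%N]mulnC ltn_ord. Qed.

Definition div3 (b : nat) (j : 'I_(3 * b)) : 'I_b := Ordinal (div3_ord j).

(* Phi(x, y) = (x, phi(y_1), ..., phi(y_b)) *)
Definition Phi (a b : nat) (xy : amb a b) : 'rV['F_3]_(a + 3 * b) :=
  \row_i match split i with
         | inl i1 => xy.1 0 i1
         | inr j => gray9 (xy.2 0 (div3 j)) (j %% 3)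
         end.

Definition rank_code (n : nat) (C : {set 'rV['F_3]_n}) : nat :=
  \dim (<< enum C >>)%VS.

Definition kernel_code (n : nat) (C : {set 'rV['F_3]_n}) : {set 'rV['F_3]_n} :=
  [set x | [set y + x | y in C] == C].

Definition ker_code (n : nat) (C : {set 'rV['F_3]_n}) : nat :=
  \dim (<< enum (kernel_code C) >>)%VS.

(* Let N = g + 2d, so that C and Phi(C) have 3^N words, and let K be the kernel of
   Phi(C). Phi is additive on pairs whose second summand has all its Z_9-coordinates in
   3Z_9, so such codewords are mapped into K. Hence the subgroup K' = C /\ Phi^-1(K),
   which has |K| = 3^(N - kbar) elements, contains every codeword whose reduction mod 3
   vanishes, and lifting a basis of a complement of the reduction of K' in the reduction
   of C gives v_1, ..., v_k in C with 3^k |K'| <= |C| (so k <= kbar) and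
   C = {sum mu_i v_i} + K'.  Moreover Phi(x + y) - Phi(x) lies in K for x in C and y in
   K', so the span of Phi(C) is contained in K + span {Phi(sum mu_i v_i)}.  Every
   coordinate of mu |-> Phi(sum mu_i v_i) is a polynomial function of degree at most 3
   without constant term on F_3^k (the high ternary digit of a sum collects cubic
   carries), and these functions span a space of dimension at most
   k + C(k,2) + C(k,3) + k^2 = k + C(k,2) + C(k+2,3).
   If Phi(C) has as many words as its span (rbar = 0), or as its kernel (kbar = 0), then it
   is linear and both defects vanish. *)

From HB Require Import structures.
From mathcomp Require Import all_boot all_order all_algebra all_field.
From mathcomp Require Import zify ring.
Set Implicit Arguments. Unset Strict Implicit. Unset Printing Implicit Defensive.
Import GRing.Theory.
Local Open Scope ring_scope.

Lemma natr_F3_mod n : (n%:R : 'F_3) = (n %% 3)%N%:R.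
Proof. by apply/val_inj; rewrite /= !Zp_nat /= modn_mod. Qed.

Lemma natr_F3_eq m n : (m%:R : 'F_3) = n%:R -> m = n %[mod 3].
Proof. by move/(congr1 val); rewrite /= !Zp_nat. Qed.

Lemma F3_cases (x : 'F_3) : [\/ x = 0, x = 1 | x = 2].
Proof.
by case: x => -[|[|[|]]] // ?; [constructor 1 | constructor 2 | constructor 3]; apply/val_inj.
Qed.

Lemma F3_interpolation (f : 'F_3 -> 'F_3) : f 0 = 0 ->
  forall x, f x = (f 2 - f 1) * x + (2 * f 1 - f 2) * x ^+ 2.
Proof.
move=> f0 x; case: (F3_cases x) => ->; rewrite ?f0;
by case: (F3_cases (f 1)) => ->; case: (F3_cases (f 2)) => ->; apply/eqP.
Qed.

Lemma F3_cube (x : 'F_3) : x ^+ 3 = x.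
Proof. by case: (F3_cases x) => ->; apply/eqP. Qed.

Definition hi3 (n : nat) : 'F_3 := (n %/ 3)%N%:R.

Definition carry3 (s t : nat) : 'F_3 := (3 <= s + t)%N%:R.

Lemma gray9E (t : 'Z_9) k : gray9 t k = hi3 t + k%:R * (t : nat)%:R.
Proof. by rewrite /gray9 natrD natrM /hi3 -natr_F3_mod. Qed.

Lemma natr_F3_mod9 n : ((n %% 9)%N%:R : 'F_3) = n%:R.
Proof.
have nine0 : (9%:R : 'F_3) = 0 by apply/eqP.
by rewrite [in RHS](divn_eq n 9) natrD natrM nine0 mulr0 add0r.
Qed.

Lemma hi3_mod9 n : hi3 (n %% 9) = hi3 n.
Proof.
rewrite /hi3 -[in RHS]natr_F3_mod9 [in RHS]natr_F3_mod [in LHS]natr_F3_mod.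
by congr (_%:R); lia.
Qed.

Lemma hi3D n m : hi3 (n + m) = hi3 n + hi3 m + carry3 (n %% 3) (m %% 3).
Proof. by rewrite /hi3 /carry3 -!natrD; congr (_%:R); case: leqP; lia. Qed.

Lemma hi3D3 n m : hi3 (n + 3 * m) = hi3 n + m%:R.
Proof. by rewrite /hi3 -natrD; congr (_%:R); lia. Qed.

Lemma carry3E s t : (s < 3)%N -> (t < 3)%N ->
  carry3 s t = 2 * s%:R * t%:R * (1 + s%:R + t%:R).
Proof. by case: s => [|[|[|]]] //; case: t => [|[|[|]]] // _ _; apply/eqP. Qed.

Section GrayMap.
Variables a b : nat.
Implicit Types x y t : amb a b.

Definition res3 x : 'rV['F_3]_b := \row_l ((x.2 0 l : nat)%:R).

Fact res3_is_nmod_morphism : nmod_morphism res3.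
Proof.
split=> [|x y]; apply/rowP => l; rewrite !mxE //=.
by rewrite [LHS]natr_F3_mod9 natrD.
Qed.

HB.instance Definition _ := GRing.isNmodMorphism.Build (amb a b) 'rV_b res3
  res3_is_nmod_morphism.

Lemma Phi0 : Phi (0 : amb a b) = 0.
Proof.
apply/rowP => i; rewrite !mxE; case: (split i) => [i1|j]; rewrite /= mxE //.
by rewrite gray9E /hi3 /= mulr0 addr0.
Qed.

Lemma Phi_add_res3_eq0 x t : res3 t = 0 -> Phi (x + t) = Phi x + Phi t.
Proof.
move=> t0; apply/rowP => i; rewrite !mxE; case: (split i) => [i1|j] /=.
  by rewrite mxE.
have /natr_F3_eq t3 : ((t.2 0 (div3 j) : nat)%:R : 'F_3) = 0%:R.
  by move/rowP/(_ (div3 j)): t0; rewrite !mxE.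
rewrite mxE !gray9E /= hi3_mod9 natr_F3_mod9.
move: (x.2 0 (div3 j) : nat) (t.2 0 (div3 j) : nat) t3 => X T t3.
have -> : T = (3 * (T %/ 3))%N by lia.
by rewrite hi3D3 /hi3 natrD !natrM mulKn // (natr_F3_mod 3) !mul0r; ring.
Qed.

(* Addition with the carries from the low to the high ternary digit of each Z_9
   coordinate discarded. *)
Definition add_nocarry x y : amb a b :=
  (x.1 + y.1, \row_l (let X := (x.2 0 l : nat) in let Y := (y.2 0 l : nat) in
                     (3 * (X %/ 3 + Y %/ 3) + (X + Y) %% 3)%N%:R)).

Lemma Phi_add_nocarry x y : Phi (add_nocarry x y) = Phi x + Phi y.
Proof.
apply/rowP => i; rewrite !mxE; case: (split i) => [i1|j] /=.
  by rewrite mxE.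
rewrite !mxE !gray9E val_Zp_nat // hi3_mod9 natr_F3_mod9.
move: (x.2 0 (div3 j) : nat) (y.2 0 (div3 j) : nat) => X Y.
rewrite addnC hi3D3 /hi3 divn_small ?ltn_mod // add0r.
have -> : (((X + Y) %% 3 + 3 * (X %/ 3 + Y %/ 3))%N%:R : 'F_3) = (X + Y)%:R.
  by rewrite natr_F3_mod [RHS]natr_F3_mod; congr (_%:R); lia.
by rewrite !natrD; ring.
Qed.

Lemma res3_add_nocarry x y : res3 (add_nocarry x y) = res3 x + res3 y.
Proof.
apply/rowP => l; rewrite !mxE val_Zp_nat // natr_F3_mod9.
by rewrite natrD natrM (natr_F3_mod 3) mul0r add0r -natr_F3_mod natrD.
Qed.

Lemma Phi_inj : injective (@Phi a b).
Proof.
move=> x y Exy; apply: injective_projections.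
  apply/rowP => i; have /rowP/(_ (lshift (3 * b) i)) := Exy.
  by rewrite !mxE (unsplitK (inl _)).
apply/rowP => l.
have dig r : (r < 3)%N -> gray9 (x.2 0 l) r = gray9 (y.2 0 l) r.
  move=> r3; have lt : (3 * l + r < 3 * b)%N by have := ltn_ord l; lia.
  have /rowP/(_ (rshift a (Ordinal lt))) := Exy; rewrite !mxE (unsplitK (inr _)).
  have -> : div3 (Ordinal lt) = l by apply/val_inj => /=; lia.
  by have -> : ((3 * l + r) %% 3 = r)%N by lia.
have := dig 0%N isT; have := dig 1%N isT; rewrite !gray9E !mul0r !mul1r !addr0.
move=> /[swap] hi_eq; rewrite hi_eq => /addrI /natr_F3_eq lo_eq.
move/natr_F3_eq: hi_eq => hi_eq; apply/val_inj; move: hi_eq lo_eq.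
case: (x.2 0 l) (y.2 0 l) => [X ltX] [Y ltY] /=; move: ltX ltY.
by rewrite -[(Zp_trunc 9).+2]/9%N; lia.
Qed.

End GrayMap.

Section ZmodClosedPred.
Variables (V : zmodType) (S : {pred V}) (S_zmod : zmod_closed S).

Lemma mem_zmod0 : 0 \in S.
Proof. by case: S_zmod. Qed.

Lemma mem_zmodB : {in S &, forall u v, u - v \in S}.
Proof. by case: S_zmod. Qed.

Lemma mem_zmodN : {in S, forall u, - u \in S}.
Proof. by move=> u uS; rewrite -sub0r mem_zmodB ?mem_zmod0. Qed.

Lemma mem_zmodD : {in S &, forall u v, u + v \in S}.
Proof. by move=> u v uS vS; rewrite -[v]opprK mem_zmodB ?mem_zmodN. Qed.

Lemma mem_zmodMn u m : u \in S -> u *+ m \in S.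
Proof.
by move=> uS; elim: m => [|m IHm]; rewrite ?mulr0n ?mem_zmod0 // mulrS mem_zmodD.
Qed.

Lemma mem_zmod_sum (I : Type) (r : seq I) (P : pred I) (F : I -> V) :
  (forall i, P i -> F i \in S) -> \sum_(i <- r | P i) F i \in S.
Proof.
by move=> FS; apply: (big_ind (fun x => x \in S)) => //; [apply: mem_zmod0 | apply: mem_zmodD].
Qed.

End ZmodClosedPred.

Section ZmodClosedRows.
Variables (p n : nat) (S : {set 'rV['F_p]_n}) (S_zmod : zmod_closed S).

Lemma mem_span_zmod_closed v : (v \in <<enum S>>%VS) = (v \in S).
Proof.
apply/idP/idP => [|vS]; last by rewrite memv_span ?mem_enum.
rewrite -[enum S]/(tval (in_tuple (enum S))) => /coord_span ->.
apply: (mem_zmod_sum S_zmod) => i _.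
by rewrite -[coord _ _ _]natr_Zp scaler_nat mem_zmodMn // -mem_enum mem_nth ?size_tuple.
Qed.

Lemma card_zmod_closed : prime p -> #|S| = (p ^ \dim <<enum S>>)%N.
Proof.
move=> p_pr; have := card_vspace <<enum S>>%VS; rewrite card_Fp // => <-.
by apply: eq_card => v; rewrite mem_span_zmod_closed.
Qed.

End ZmodClosedRows.

Section Kernel.
Variable n : nat.
Implicit Types S : {set 'rV['F_3]_n}.

Lemma kernel_codeP S x :
  reflect (forall y, y \in S -> y + x \in S) (x \in kernel_code S).
Proof.
rewrite inE; apply: (iffP eqP) => [E y yS | Sx].
  by rewrite -E; apply: imset_f.
apply/eqP; rewrite eqEcard card_imset ?leqnn ?andbT; last exact: addIr.
by apply/subsetP => _ /imsetP[y yS ->]; apply: Sx.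
Qed.

Lemma kernel_code_sub S : 0 \in S -> kernel_code S \subset S.
Proof. by move=> S0; apply/subsetP => x /kernel_codeP/(_ 0 S0); rewrite add0r. Qed.

Lemma kernel_code_zmod_closed S : zmod_closed (kernel_code S).
Proof.
split=> [|x z /kernel_codeP Sx zK]; first by apply/kernel_codeP => y; rewrite addr0.
apply/kernel_codeP => y yS; rewrite addrA.
have : y + x \in [set w + z | w in S] by move: zK; rewrite inE => /eqP ->; apply: Sx.
by case/imsetP=> w wS ->; rewrite addrK.
Qed.

Lemma kernel_code_id S : zmod_closed S -> kernel_code S = S.
Proof.
move=> [S0 SB]; apply/setP => x; apply/kernel_codeP/idP => [/(_ 0 S0)|xS y yS].
  by rewrite add0r.
by rewrite -[x]opprK SB // -[- x]sub0r SB.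
Qed.

Lemma card_kernel_code S : #|kernel_code S| = (3 ^ ker_code S)%N.
Proof. exact: card_zmod_closed (kernel_code_zmod_closed S) _. Qed.

Lemma ker_code_id S : kernel_code S = S -> ker_code S = rank_code S.
Proof. by rewrite /ker_code => ->. Qed.

Lemma rank_code_eq_ker S : 0 \in S -> #|S| = (3 ^ ker_code S)%N ->
  rank_code S = ker_code S.
Proof.
move=> S0 cardS; apply/esym/ker_code_id/eqP; rewrite eqEcard kernel_code_sub //=.
by rewrite card_kernel_code cardS.
Qed.

(* A code with [3 ^ rank] words is its own span, hence linear. *)
Lemma ker_code_eq_rank S : #|S| = (3 ^ rank_code S)%N -> ker_code S = rank_code S.
Proof.
move=> cardS; apply/ker_code_id/kernel_code_id.
pose T := [set v | v \in <<enum S>>%VS].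
have -> : S = T.
  apply/eqP; rewrite eqEcard; apply/andP; split.
    by apply/subsetP => v vS; rewrite inE memv_span ?mem_enum.
  by rewrite cardS cardsE card_vspace card_Fp.
by split=> [|u v]; rewrite !inE ?mem0v //; apply: memvB.
Qed.

End Kernel.

Lemma span_coord_funs (K : fieldType) (D : finType) n (s : seq {ffun D -> K^o})
    (F : D -> 'rV[K]_n) :
  (forall j, [ffun x => F x 0 j : K^o] \in <<s>>%VS) ->
  exists2 L : seq 'rV[K]_n, size L = size s & forall x, F x \in <<L>>%VS.
Proof.
move=> Fs; pose c j := coord (in_tuple s) ^~ [ffun x => F x 0 j : K^o].
exists [seq \row_j c j i | i <- enum 'I_(size s)]; first by rewrite size_map size_enum_ord.
move=> x; have -> : F x = \sum_(i < size s) s`_i x *: \row_j c j i.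
  apply/rowP => j; rewrite summxE.
  have := congr1 (fun f : {ffun D -> K^o} => f x) (coord_span (X := in_tuple s) (Fs j)).
  rewrite ffunE sum_ffunE => ->; apply: eq_bigr => i _.
  by rewrite !mxE ffunE mulrC.
by apply: memv_suml => i _; apply/memvZ/memv_span/map_f; rewrite mem_enum.
Qed.

Section CubicFunctions.
Variable k : nat.
Local Notation mu_t := {ffun 'I_k -> 'F_3}.

(* Since [x ^+ 3 = x] on [F_3], these monomials span all polynomial functions of
   degree at most 3 without constant term. *)
Definition cubic_monomials : seq {ffun mu_t -> ('F_3)^o} :=
  [seq [ffun mu : mu_t => \prod_(i in A) mu i]
     | A : {set 'I_k} <- enum [pred A : {set 'I_k} | 0 < #|A| <= 3]%N]
  ++ [seq [ffun mu : mu_t => mu p.1 ^+ 2 * (if p.1 == p.2 then 1 else mu p.2)]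
     | p <- enum {: 'I_k * 'I_k}].

Definition cubic_fun (f : mu_t -> 'F_3) : bool :=
  [ffun mu => f mu : ('F_3)^o] \in <<cubic_monomials>>%VS.

Lemma size_cubic_monomials :
  size cubic_monomials = ('C(k, 1) + 'C(k, 2) + 'C(k, 3) + k * k)%N.
Proof.
rewrite size_cat !size_map -cardE -enumT -cardT card_prod card_ord; congr (_ + _)%N.
have card_sum (P : {pred {set 'I_k}}) : #|P| = (\sum_A (A \in P : nat))%N.
  by rewrite -sum1_card big_mkcond; apply: eq_bigr => A _; case: (A \in P).
have card_draws_k j : 'C(k, j) = #|[set A : {set 'I_k} | #|A| == j]|.
  by rewrite card_draws card_ord.
rewrite !card_draws_k !card_sum -!big_split; apply: eq_bigr => A _.
by rewrite !inE; case: #|A| => [|[|[|[|]]]].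
Qed.

Lemma cubic_fun0 : cubic_fun (fun _ : mu_t => 0).
Proof.
by rewrite /cubic_fun (_ : [ffun _ => _] = 0) ?mem0v //; apply/ffunP => mu; rewrite !ffunE.
Qed.

Lemma cubic_fun_ext f g : f =1 g -> cubic_fun f -> cubic_fun g.
Proof.
move=> fg; rewrite /cubic_fun (_ : [ffun mu => g mu : ('F_3)^o] = [ffun mu => f mu]) //.
by apply/ffunP => mu; rewrite !ffunE fg.
Qed.

Lemma cubic_funD f g :
  cubic_fun f -> cubic_fun g -> cubic_fun (fun mu => f mu + g mu).
Proof.
move=> cf cg; rewrite /cubic_fun; have -> : [ffun mu => f mu + g mu : ('F_3)^o] =
    [ffun mu => f mu : ('F_3)^o] + [ffun mu => g mu : ('F_3)^o].
  by apply/ffunP => mu; rewrite !ffunE.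
exact: memvD.
Qed.

Lemma cubic_funZ (c : 'F_3) f : cubic_fun f -> cubic_fun (fun mu => c * f mu).
Proof.
move=> cf; rewrite /cubic_fun; have -> : [ffun mu => c * f mu : ('F_3)^o] =
    c *: [ffun mu => f mu : ('F_3)^o] by apply/ffunP => mu; rewrite !ffunE.
exact: memvZ.
Qed.

Lemma cubic_fun_sum (I : Type) (r : seq I) (P : pred I) (F : I -> mu_t -> 'F_3) :
  (forall i, P i -> cubic_fun (F i)) -> cubic_fun (fun mu => \sum_(i <- r | P i) F i mu).
Proof.
move=> cF; rewrite /cubic_fun; have -> : [ffun mu => \sum_(i <- r | P i) F i mu : ('F_3)^o] =
    \sum_(i <- r | P i) [ffun mu => F i mu : ('F_3)^o].
  by apply/ffunP => mu; rewrite sum_ffunE ffunE; apply: eq_bigr => i _; rewrite ffunE.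
exact: memv_suml.
Qed.

Lemma cubic_fun_prod (A : {set 'I_k}) : (0 < #|A| <= 3)%N ->
  cubic_fun (fun mu => \prod_(i in A) mu i).
Proof. by move=> A13; rewrite /cubic_fun memv_span // mem_cat map_f // mem_enum. Qed.

Lemma cubic_fun_monomial2 i j :
  cubic_fun (fun mu => mu i ^+ 2 * (if i == j then 1 else mu j)).
Proof.
rewrite /cubic_fun memv_span // mem_cat; apply/orP; right; apply/mapP.
by exists (i, j); rewrite ?mem_enum //; apply/ffunP => mu; rewrite !ffunE.
Qed.

Lemma cubic_fun_var i : cubic_fun (fun mu => mu i).
Proof.
apply: cubic_fun_ext (cubic_fun_prod (A := [set i]) _) => [mu|]; first by rewrite big_set1.
by rewrite cards1.
Qed.

Lemma cubic_fun_sqr_mul i j : cubic_fun (fun mu => mu i ^+ 2 * mu j).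
Proof.
case: (eqVneq i j) => [<- | ij].
  by apply: cubic_fun_ext (cubic_fun_var i) => mu; rewrite -exprSr F3_cube.
by apply: cubic_fun_ext (cubic_fun_monomial2 i j) => mu; rewrite (negbTE ij).
Qed.

Lemma cubic_fun_mul2 i j : cubic_fun (fun mu => mu i * mu j).
Proof.
case: (eqVneq i j) => [<- | ij].
  by apply: cubic_fun_ext (cubic_fun_monomial2 i i) => mu; rewrite eqxx mulr1 expr2.
apply: cubic_fun_ext (cubic_fun_prod (A := [set i; j]) _) => [mu|].
  by rewrite big_setU1 ?big_set1 // inE.
by rewrite cards2 ij.
Qed.

Lemma cubic_fun_mul3 i j l : cubic_fun (fun mu => mu i * mu j * mu l).
Proof.
case: (eqVneq i j) => [<- | ij].
  by apply: cubic_fun_ext (cubic_fun_sqr_mul i l) => mu; rewrite expr2.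
case: (eqVneq i l) => [<- | il].
  by apply: cubic_fun_ext (cubic_fun_sqr_mul i j) => mu; rewrite expr2 mulrAC.
case: (eqVneq j l) => [<- | jl].
  by apply: cubic_fun_ext (cubic_fun_sqr_mul j i) => mu; rewrite expr2 mulrC mulrA.
have i_jl : i \notin [set j; l] by rewrite !inE negb_or ij il.
apply: cubic_fun_ext (cubic_fun_prod (A := i |: [set j; l]) _) => [mu|].
  by rewrite big_setU1 // big_setU1 ?inE // big_set1 /= mulrA.
by rewrite cardsU1 i_jl cards2 jl.
Qed.

Definition linf (r : seq 'I_k) (c : 'I_k -> 'F_3) (mu : mu_t) : 'F_3 :=
  \sum_(i <- r) c i * mu i.

Lemma cubic_fun_lin r c : cubic_fun (linf r c).
Proof. by apply: cubic_fun_sum => i _; apply/cubic_funZ/cubic_fun_var. Qed.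

Lemma cubic_fun_lin2 r1 r2 c d : cubic_fun (fun mu => linf r1 c mu * linf r2 d mu).
Proof.
apply: (@cubic_fun_ext (fun mu => \sum_(i <- r1) \sum_(j <- r2) c i * d j * (mu i * mu j))).
  move=> mu; rewrite /linf mulr_suml; apply: eq_bigr => i _.
  by rewrite mulr_sumr; apply: eq_bigr => j _; ring.
by do 2 (apply: cubic_fun_sum => ? _); apply/cubic_funZ/cubic_fun_mul2.
Qed.

Lemma cubic_fun_lin3 r1 r2 r3 c d e :
  cubic_fun (fun mu => linf r1 c mu * linf r2 d mu * linf r3 e mu).
Proof.
apply: (@cubic_fun_ext (fun mu => \sum_(i <- r1) \sum_(j <- r2) \sum_(l <- r3)
  c i * d j * e l * (mu i * mu j * mu l))).
  move=> mu; rewrite /linf !mulr_suml; apply: eq_bigr => i _.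
  rewrite -mulrA mulr_suml mulr_sumr; apply: eq_bigr => j _.
  by rewrite mulrA mulr_sumr; apply: eq_bigr => l _; ring.
by do 3 (apply: cubic_fun_sum => ? _); apply/cubic_funZ/cubic_fun_mul3.
Qed.

Lemma cubic_fun_of_var (g : 'F_3 -> 'F_3) i : g 0 = 0 -> cubic_fun (fun mu => g (mu i)).
Proof.
move=> g0; apply: cubic_fun_ext (cubic_funD (cubic_funZ (g 2 - g 1) (cubic_fun_var i))
  (cubic_funZ (2 * g 1 - g 2) (cubic_fun_mul2 i i))) => mu.
by rewrite [in RHS](F3_interpolation g0) expr2.
Qed.

End CubicFunctions.

Lemma span_additive_image (U : zmodType) (S : {pred U}) p n
    (f : {additive U -> 'rV['F_p]_n}) (s : seq U) w :
  zmod_closed S -> {subset s <= S} -> w \in <<map f s>>%VS ->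
  exists2 x, x \in S & f x = w.
Proof.
move=> S_zmod sS; rewrite -[map f s]/(tval (in_tuple (map f s))) => /coord_span ->.
set c := coord _; have size_s : size (map f s) = size s by rewrite size_map.
exists (\sum_(i < size (map f s)) s`_i *+ c i w).
  apply: (mem_zmod_sum S_zmod) => i _.
  by apply/(mem_zmodMn S_zmod)/sS/mem_nth; rewrite -size_s.
rewrite raddf_sum; apply: eq_bigr => i _.
by rewrite raddfMn -scaler_nat natr_Zp (nth_map 0) // -size_s.
Qed.

Lemma is_Z3Z9_code_zmod_closed a b (C : {set amb a b}) :
  is_Z3Z9_code C -> zmod_closed C.
Proof.
by case/andP=> C0 /forall_inP CB; split=> // x y xC yC; move/forall_inP: (CB x xC); apply.
Qed.

Definition combo a b k (v : 'I_k -> amb a b) (c : 'I_k -> 'F_3) : amb a b :=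
  \sum_i v i *+ c i.

Lemma res3_combo a b k (v : 'I_k -> amb a b) c :
  res3 (combo v c) = \sum_i c i *: res3 (v i).
Proof.
rewrite raddf_sum; apply: eq_bigr => i _.
by rewrite raddfMn -scaler_nat natr_Zp.
Qed.

Section GrayCombo.
Variables (a b k : nat) (v : 'I_k -> amb a b).
Local Notation mu_t := {ffun 'I_k -> 'F_3}.

(* By [hi3D] and [carry3E], each new summand adds a cubic polynomial in the residues
   mod 3 of the partial sums, and these residues are linear in [mu]. *)
Lemma cubic_fun_hi3_sum (A : 'I_k -> nat) (r : seq 'I_k) :
  cubic_fun (fun mu : mu_t => hi3 (\sum_(i <- r) mu i * A i)%N).
Proof.
elim: r => [|m r IHr]; first by apply: cubic_fun_ext (@cubic_fun0 k) => mu; rewrite big_nil.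
pose s := linf [:: m] (fun i => (A i)%:R); pose t := linf r (fun i => (A i)%:R).
have natr_sum_mul (r' : seq 'I_k) (mu : mu_t) :
    ((\sum_(i <- r') mu i * A i)%N%:R : 'F_3) = linf r' (fun i => (A i)%:R) mu.
  by rewrite natr_sum; apply: eq_bigr => i _; rewrite natrM natr_Zp mulrC.
have carryE (mu : mu_t) : carry3 ((mu m * A m) %% 3) ((\sum_(i <- r) mu i * A i) %% 3) =
    2 * (s mu * t mu) + 2 * (s mu * s mu * t mu) + 2 * (s mu * t mu * t mu).
  rewrite carry3E ?ltn_mod // -!natr_F3_mod natr_sum_mul.
  have -> : (((mu m * A m)%N%:R : 'F_3) = s mu) by rewrite /s -natr_sum_mul big_seq1.
  by rewrite -/(t mu); ring.
apply: (@cubic_fun_ext k (fun mu => hi3 (mu m * A m) + hi3 (\sum_(i <- r) mu i * A i)%N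
    + (2 * (s mu * t mu) + 2 * (s mu * s mu * t mu) + 2 * (s mu * t mu * t mu)))).
  by move=> mu; rewrite big_cons hi3D carryE.
apply: cubic_funD; first apply: cubic_funD => //.
  by apply: (cubic_fun_of_var (g := fun x => hi3 (x * A m))); rewrite /hi3 mul0n.
by apply: cubic_funD; first apply: cubic_funD; apply: cubic_funZ;
  [apply: cubic_fun_lin2 | apply: cubic_fun_lin3 | apply: cubic_fun_lin3].
Qed.

Lemma combo_fst (mu : mu_t) i :
  (combo v mu).1 0 i = linf (index_enum _) (fun l => (v l).1 0 i) mu.
Proof.
rewrite /combo raddf_sum summxE; apply: eq_bigr => l _.
by rewrite raddfMn mulmxnE -mulr_natl natr_Zp mulrC.
Qed.

Lemma combo_snd (mu : mu_t) l :
  ((combo v mu).2 0 l : nat) = ((\sum_i (mu i : nat) * (v i).2 0%R l) %% 9)%N.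
Proof.
rewrite /combo raddf_sum summxE -val_Zp_nat // natr_sum; congr val.
by apply: eq_bigr => i _; rewrite raddfMn mulmxnE natrM natr_Zp mulr_natl.
Qed.

Lemma cubic_fun_Phi_combo j : cubic_fun (fun mu => Phi (combo v mu) 0 j).
Proof.
apply: (@cubic_fun_ext k (fun mu => match split j with
   | inl i => (combo v mu).1 0 i
   | inr j => gray9 ((combo v mu).2 0 (div3 j)) (j %% 3) end)).
  by move=> mu; rewrite mxE.
case: (split j) => [i | j3].
  by apply: cubic_fun_ext (cubic_fun_lin _ _) => mu; rewrite combo_fst.
pose A i := ((v i).2 0 (div3 j3) : nat).
apply: cubic_fun_ext (cubic_funD (cubic_fun_hi3_sum A (index_enum _))
  (cubic_funZ ((j3 %% 3)%:R) (cubic_fun_lin (index_enum _) (fun i => (A i)%:R)))) => mu.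
rewrite gray9E combo_snd hi3_mod9 natr_F3_mod9 natr_sum; congr (_ + _ * _).
by apply: eq_bigr => i _; rewrite natrM natr_Zp mulrC.
Qed.

Lemma span_Phi_combo : exists2 L : seq 'rV['F_3]_(a + 3 * b),
  size L = ('C(k, 1) + 'C(k, 2) + 'C(k, 3) + k * k)%N &
  forall mu : mu_t, Phi (combo v mu) \in <<L>>%VS.
Proof.
rewrite -(size_cubic_monomials k); apply: span_coord_funs => j.
exact: cubic_fun_Phi_combo.
Qed.

End GrayCombo.

Section Code.
Variables (a b : nat) (C : {set amb a b}) (C_code : is_Z3Z9_code C).

Let C_zmod := is_Z3Z9_code_zmod_closed C_code.
Let CC := [set Phi x | x in C].
Let K := kernel_code CC.
Let K_zmod := kernel_code_zmod_closed CC.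

Lemma mem_Phi_code x : (Phi x \in CC) = (x \in C).
Proof. exact/mem_imset/Phi_inj. Qed.

Lemma Phi_code0 : 0 \in CC.
Proof. by rewrite -(Phi0 a b) mem_Phi_code (mem_zmod0 C_zmod). Qed.

Lemma card_Phi_code : #|CC| = #|C|.
Proof. exact/card_imset/Phi_inj. Qed.

Definition kernel_preim := [set x in C | Phi x \in K].

Lemma mem_kernel_preim x : (x \in kernel_preim) = (x \in C) && (Phi x \in K).
Proof. by rewrite in_set. Qed.

Lemma Phi_kernel_res3_eq0 t : t \in C -> res3 t = 0 -> Phi t \in K.
Proof.
move=> tC t0; apply/kernel_codeP => _ /imsetP[x xC ->].
by rewrite -Phi_add_res3_eq0 // mem_Phi_code (mem_zmodD C_zmod).
Qed.

(* The carry-free sum [z] of [x] and [y] lies in [C] as [Phi z = Phi x + Phi y] does,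
   and [z - (x + y)] has residue [0], so its image is in [K]. *)
Lemma Phi_addr_kernel x y : x \in C -> y \in kernel_preim -> Phi (x + y) - Phi x \in K.
Proof.
move=> xC; rewrite mem_kernel_preim => /andP[yC yK].
set z := add_nocarry x y.
have zC : z \in C.
  by rewrite -mem_Phi_code Phi_add_nocarry; apply/kernel_codeP; rewrite ?mem_Phi_code.
have t0 : res3 (z - (x + y)) = 0 by rewrite raddfB raddfD /= res3_add_nocarry subrr.
have tK : Phi (z - (x + y)) \in K.
  by rewrite Phi_kernel_res3_eq0 // (mem_zmodB C_zmod) // (mem_zmodD C_zmod).
have E : Phi z = Phi (x + y) + Phi (z - (x + y)).
  by rewrite -Phi_add_res3_eq0 // addrC subrK.
have -> : Phi (x + y) - Phi x = Phi y - Phi (z - (x + y)).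
  rewrite -[Phi (x + y)](addrK (Phi (z - (x + y)))) -E Phi_add_nocarry.
  by rewrite addrAC [Phi x + _]addrC addrK.
exact: (mem_zmodB K_zmod yK tK).
Qed.

Lemma kernel_preim_zmod_closed : zmod_closed kernel_preim.
Proof.
split=> [|x y xP yP].
  by rewrite mem_kernel_preim (mem_zmod0 C_zmod) Phi0 (mem_zmod0 K_zmod).
move: (xP) (yP); rewrite !mem_kernel_preim => /andP[xC xK] /andP[yC _].
have xyC : x - y \in C by rewrite (mem_zmodB C_zmod).
have := Phi_addr_kernel xyC yP; rewrite subrK xyC => xyK.
have -> : Phi (x - y) = Phi x - (Phi x - Phi (x - y)) by rewrite opprB [RHS]addrC subrK.
exact: (mem_zmodB K_zmod xK xyK).
Qed.

Lemma card_kernel_preim : #|kernel_preim| = #|K|.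
Proof.
rewrite -(card_imset _ (@Phi_inj a b)); apply: eq_card => w.
apply/imsetP/idP => [[x] | wK]; first by rewrite mem_kernel_preim => /andP[_ ?] ->.
have := subsetP (kernel_code_sub Phi_code0) w wK; case/imsetP => x xC Ew.
by exists x; rewrite // mem_kernel_preim xC -Ew.
Qed.

Lemma kernel_preim_sub : {subset kernel_preim <= C}.
Proof. by move=> x; rewrite mem_kernel_preim => /andP[]. Qed.

Lemma kernel_preim_res3_eq0 t : t \in C -> res3 t = 0 -> t \in kernel_preim.
Proof. by move=> tC t0; rewrite mem_kernel_preim tC Phi_kernel_res3_eq0. Qed.

Lemma mem_combo_code k (v : 'I_k -> amb a b) c :
  (forall i, v i \in C) -> combo v c \in C.
Proof. by move=> vC; apply: (mem_zmod_sum C_zmod) => i _; apply: (mem_zmodMn C_zmod). Qed.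

Let W := <<map (@res3 a b) (enum C)>>%VS.
Let U := <<map (@res3 a b) (enum kernel_preim)>>%VS.

Lemma combo_cover k (v : 'I_k -> amb a b) c x :
  (forall i, v i \in C) -> x \in C ->
  res3 x - \sum_i c i *: res3 (v i) \in U -> x - combo v c \in kernel_preim.
Proof.
move=> vC xC /(span_additive_image kernel_preim_zmod_closed) [].
  by move=> y; rewrite mem_enum.
move=> y yK ry; have yC := kernel_preim_sub yK.
have vcC := mem_combo_code c vC.
rewrite -(subrK y (x - _)) (mem_zmodD kernel_preim_zmod_closed) //.
apply: kernel_preim_res3_eq0; first by rewrite !(mem_zmodB C_zmod).
by rewrite !raddfB /= res3_combo ry subrr.
Qed.

Lemma card_combo_translates k (v : 'I_k -> amb a b) :
  (forall i, v i \in C) ->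
  (forall c : {ffun 'I_k -> 'F_3}, \sum_i c i *: res3 (v i) \in U -> c = 0) ->
  (3 ^ k * #|kernel_preim| <= #|C|)%N.
Proof.
move=> vC v_free; pose f (p : {ffun 'I_k -> 'F_3} * amb a b) := combo v p.1 + p.2.
have f_inj : {in setX [set: {ffun 'I_k -> 'F_3}] kernel_preim &, injective f}.
  move=> [mu y] [nu z] /setXP[_ yK] /setXP[_ zK] /= Ef.
  have Ur w : w \in kernel_preim -> res3 w \in U.
    by move=> wK; rewrite memv_span // map_f ?mem_enum.
  suff mu_nu : mu = nu by move: Ef; rewrite /f /= mu_nu => /addrI ->.
  have diff_U : \sum_i [ffun i => mu i - nu i] i *: res3 (v i) \in U.
    rewrite (eq_bigr (fun i => mu i *: res3 (v i) - nu i *: res3 (v i))); last first.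
      by move=> i _; rewrite ffunE scalerBl.
    have := congr1 (@res3 a b) Ef; rewrite /f /= !raddfD /= !res3_combo => E.
    have -> : \sum_i (mu i *: res3 (v i) - nu i *: res3 (v i)) = res3 z - res3 y.
      by rewrite sumrB; apply/eqP; rewrite subr_eq addrAC [res3 z + _]addrC -E addrK.
    by rewrite memvB ?Ur.
  apply/ffunP => i; apply/eqP; rewrite -subr_eq0.
  by move/ffunP/(_ i): (v_free _ diff_U); rewrite !ffunE => ->.
have := card_in_imset f_inj; rewrite cardsX cardsT card_ffun card_Fp // card_ord => <-.
apply/subset_leq_card/subsetP => _ /imsetP[[mu y] /setXP[_ yK] ->].
by apply: (mem_zmodD C_zmod); [apply: mem_combo_code | apply: kernel_preim_sub].
Qed.

(* Lift a basis of a complement of [U] in [W = res3 C]: the lifts are independent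
   modulo [kernel_preim], and they span [C] modulo [kernel_preim] because the
   elements of [C] with residue [0] lie in [kernel_preim]. *)
Lemma code_decomposition : exists k (v : 'I_k -> amb a b),
  [/\ forall i, v i \in C,
      forall x, x \in C -> exists mu : {ffun 'I_k -> 'F_3}, x - combo v mu \in kernel_preim
    & (3 ^ k * #|kernel_preim| <= #|C|)%N].
Proof.
pose Wc := (W :\: U)%VS; pose bs := vbasis Wc.
have bsW (i : 'I_(\dim Wc)) : bs`_i \in W.
  by apply: (subvP (diffvSl W U)); apply/vbasis_mem/mem_nth; rewrite size_tuple.
have : forall i : 'I_(\dim Wc), exists x, x \in C /\ res3 x = bs`_i.
  move=> i; have [|x xC rx] := span_additive_image C_zmod _ (bsW i).
    by move=> x; rewrite mem_enum.
  by exists x.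
case/fin_all_exists => v vP.
have vC i : v i \in C by case: (vP i).
have rv (c : 'I_(\dim Wc) -> 'F_3) : \sum_i c i *: res3 (v i) = \sum_i c i *: bs`_i.
  by apply: eq_bigr => i _; case: (vP i) => _ ->.
exists (\dim Wc), v; split=> // [x xC | ].
  have : res3 x \in (Wc + U)%VS.
    have : res3 x \in W by rewrite memv_span // map_f ?mem_enum.
    rewrite -(addv_diff_cap W U) => /memv_addP[w1 w1Wc [w2 w2WU ->]].
    by rewrite memv_add // (subvP (capvSr W U)).
  case/memv_addP => w1 w1Wc [w2 w2U rx].
  exists [ffun i => coord bs i w1]; apply: combo_cover => //.
  rewrite rx rv; under eq_bigr do rewrite ffunE.
  by rewrite -(coord_vbasis w1Wc) addrAC subrr add0r.
apply: card_combo_translates => // c; rewrite rv => cU.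
have : \sum_i c i *: bs`_i \in (Wc :&: U)%VS.
  rewrite memv_cap cU andbT; apply: memv_suml => i _.
  by apply/memvZ/vbasis_mem/mem_nth; rewrite size_tuple.
rewrite capv_diff memv0 => /eqP/(freeP (basis_free (vbasisP Wc))) c0.
by apply/ffunP => i; rewrite c0 ffunE.
Qed.

Lemma rank_code_Phi_le : exists k,
  (3 ^ k * 3 ^ ker_code CC <= #|C|)%N /\
  (rank_code CC <= ker_code CC + ('C(k, 1) + 'C(k, 2) + 'C(k, 3) + k * k))%N.
Proof.
have [k [v [vC cover card_le]]] := code_decomposition.
have [L sizeL LP] := span_Phi_combo v.
exists k; split; first by rewrite -card_kernel_code -card_kernel_preim.
have sub : (<<enum CC>> <= <<enum (kernel_code CC)>> + <<L>>)%VS.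
  apply/span_subvP => w; rewrite mem_enum => /imsetP[x xC ->].
  have [mu xmu] := cover x xC.
  have -> : x = combo v mu + (x - combo v mu) by rewrite addrC subrK.
  rewrite -(subrK (Phi (combo v mu)) (Phi (_ + _))) memv_add ?LP // memv_span // mem_enum.
  by apply: Phi_addr_kernel => //; apply: mem_combo_code.
rewrite -sizeL; apply: leq_trans (dimvS sub) _.
by apply: leq_trans (dimv_add_leqif _ _).1 _; rewrite leq_add2l dim_span.
Qed.

End Code.

Local Close Scope ring_scope.

Lemma card_has_type a b (C : {set amb a b}) g d k :
  has_type C g d k -> #|C| = 3 ^ (g + 2 * d).
Proof.
case=> -[f [_ [f_inj <-]]] _; rewrite card_imset // cardsT card_prod !card_mx.
by rewrite card_Fp // card_ord expnD expnM mul1n [in RHS]expnM.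
Qed.

Lemma bin_cubic_count n :
  'C(n, 1) + 'C(n, 2) + 'C(n, 3) + n * n = n + ('C(n, 2) + 'C(n + 2, 3)).
Proof.
have sqrn : n * n = n + 2 * 'C(n, 2).
  by case: n => [|n] //; rewrite -(mul_bin_diag n.+1 1) bin1 /=; lia.
by rewrite !addn2 !binS bin1 sqrn; lia.
Qed.

Lemma leq_bin_cubic_count m n : m <= n ->
  'C(m, 1) + 'C(m, 2) + 'C(m, 3) + m * m <= 'C(n, 1) + 'C(n, 2) + 'C(n, 3) + n * n.
Proof. by move=> mn; rewrite !leq_add ?leq_mul ?leq_bin2l. Qed.

Theorem lemma16 (a b : nat) (C : {set amb a b}) (g d k : nat)
  (HC : is_Z3Z9_code C) (Ht : has_type C g d k) (rbar kbar : nat) :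
  let CC := [set Phi x | x in C] in
  (rank_code CC = (g + 2 * d + rbar)%N ->
   ker_code CC = (g + 2 * d - kbar)%N ->
   (1 <= kbar <= d)%N ->
   (1 <= rbar <= 'C(kbar, 2) + 'C(kbar + 2, 3))%N) /\
  (rank_code CC = (g + 2 * d + rbar)%N ->
   ker_code CC = (g + 2 * d)%N ->
   rbar = 0%N).
Proof.
move=> CC; have cardCC : #|CC| = 3 ^ (g + 2 * d).
  by rewrite card_Phi_code // (card_has_type Ht).
split=> [rankE kerE /andP[kbar1 kbar_d] | rankE kerE].
  apply/andP; split.
    rewrite lt0n; apply/eqP => rbar0.
    have := ker_code_eq_rank (S := CC); rewrite cardCC rankE rbar0 addn0 => /(_ erefl).
    by rewrite kerE; lia.
  have [k' [card_k' rank_k']] := rank_code_Phi_le HC.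
  have k'_kbar : k' <= kbar.
    move: card_k'; rewrite -expnD (card_has_type Ht) leq_exp2l // kerE; lia.
  have := leq_bin_cubic_count k'_kbar; rewrite [in X in _ <= X]bin_cubic_count.
  move: rank_k'; rewrite rankE kerE.
  move: ('C(k', 1) + _ + _ + _) => count_k'; lia.
have := rank_code_eq_ker (Phi_code0 HC); rewrite cardCC kerE => /(_ erefl).
by rewrite rankE; lia.
Qed.
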